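(* Let $F,G\colon(P,u)\to(Q,v)$ be two morphisms in $\mathrm{Elt}(\mathrm{Pol}_\omega^* )$ with $(P,u)$ principal. Then $F=G$.
   Context: An $\omega$-precategory is an $\omega$-globular set with identities and compositions $u\ast_iv$ satisfying the axioms of strict $\omega$-categories except the interchange law. An $\omega$-polygraph $P$ consists of sets $P_k$ of $k$-generators with globular sources/targets in the free precategory on lower generators; $P^*$ is its free $\omega$-precategory; $\mathrm{Pol}_\omega$ is the category of $\omega$-polygraphs and generator-wise morphisms $F$, inducing prefunctors $F^*$. $\mathrm{Elt}(\mathrm{Pol}_\omega^* )$ is the category whose objects are pairs $(P,u)$ with $P$ an $\omega$-polygraph and $u$ a cell of $P^*$ (of any dimension), and whose morphisms $(P,u)\to(Q,v)$ are polygraph morphisms $F\colon P\to Q$ with $F^*(u)=v$. $(P,u)$ is principal if every morphism $(Q,v)\to(P,u)$ in this category whose underlying morphism is a monomorphism in $\mathrm{Pol}_\omega$ is an isomorphism. *)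

From mathcomp Require Import all_boot.

Set Implicit Arguments.
Unset Strict Implicit.
Unset Printing Implicit Defensive.

Inductive term (G : nat -> Type) : Type :=
| tgen (n : nat) (g : G n)
| tid (t : term G)              (* identity on t : raises dimension by one *)
| tcomp (i : nat) (u v : term G).

Arguments tgen {G n} g.
Arguments tid {G} t.
Arguments tcomp {G} i u v.

Fixpoint map_term (G G' : nat -> Type) (f : forall n, G n -> G' n)
  (t : term G) : term G' :=
  match t with
  | tgen n g => tgen (f n g)
  | tid t' => tid (map_term f t')
  | tcomp i u v => tcomp i (map_term f u) (map_term f v)
  end.

Record prepoly := Prepoly {
  gen : nat -> Type;
  psrc : forall k, gen k.+1 -> term gen;
  ptgt : forall k, gen k.+1 -> term gen
}.

Arguments psrc {p k} g.
Arguments ptgt {p k} g.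

Section Cells.
Variable P : prepoly.
Local Notation T := (term (gen P)).

(* source / target of a term viewed as an n-cell (n >= 1) *)
Fixpoint srcn (n : nat) (t : T) : T :=
  match t with
  | tgen m g =>
      (match m as m0 return gen P m0 -> T with
       | 0 => fun g => tgen g
       | k.+1 => fun g => psrc g
       end) g
  | tid t' => t'
  | tcomp i u v => if i == n.-1 then srcn n u else tcomp i (srcn n u) (srcn n v)
  end.

Fixpoint tgtn (n : nat) (t : T) : T :=
  match t with
  | tgen m g =>
      (match m as m0 return gen P m0 -> T with
       | 0 => fun g => tgen g
       | k.+1 => fun g => ptgt g
       end) g
  | tid t' => t'
  | tcomp i u v => if i == n.-1 then tgtn n v else tcomp i (tgtn n u) (tgtn n v)
  end.

Fixpoint srci (d n : nat) (t : T) : T :=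
  match d with 0 => t | d'.+1 => srci d' n.-1 (srcn n t) end.
Fixpoint tgti (d n : nat) (t : T) : T :=
  match d with 0 => t | d'.+1 => tgti d' n.-1 (tgtn n t) end.

Definition src_at (n i : nat) (t : T) : T := srci (n - i) n t.
Definition tgt_at (n i : nat) (t : T) : T := tgti (n - i) n t.

Definition idn (k : nat) (t : T) : T := iter k tid t.

(* cell n t : t is an n-cell of the free omega-precategory P^*;
   eqv n a b : a and b denote the same n-cell of P^*
   (congruence generated by the precategory axioms: associativity,
   unitality, compatibility of identities with compositions; no
   interchange law). *)
Inductive cell : nat -> T -> Prop :=
| c_gen n (g : gen P n) : cell n (tgen g)
| c_id n t : cell n t -> cell n.+1 (tid t)
| c_comp n i u v : i < n -> cell n u -> cell n v ->
    eqv i (tgt_at n i u) (src_at n i v) -> cell n (tcomp i u v)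
with eqv : nat -> T -> T -> Prop :=
| e_refl n t : cell n t -> eqv n t t
| e_sym n a b : eqv n a b -> eqv n b a
| e_trans n a b c : eqv n a b -> eqv n b c -> eqv n a c
| e_id n a b : eqv n a b -> eqv n.+1 (tid a) (tid b)
| e_comp n i u u' v v' : i < n -> eqv n u u' -> eqv n v v' ->
    eqv i (tgt_at n i u) (src_at n i v) ->
    eqv n (tcomp i u v) (tcomp i u' v')
| e_assoc n i u v w : i < n -> cell n u -> cell n v -> cell n w ->
    eqv i (tgt_at n i u) (src_at n i v) ->
    eqv i (tgt_at n i v) (src_at n i w) ->
    eqv n (tcomp i (tcomp i u v) w) (tcomp i u (tcomp i v w))
| e_unitl n i u : i < n -> cell n u ->
    eqv n (tcomp i (idn (n - i) (src_at n i u)) u) u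
| e_unitr n i u : i < n -> cell n u ->
    eqv n (tcomp i u (idn (n - i) (tgt_at n i u))) u
| e_idcomp n i u v : i < n -> cell n u -> cell n v ->
    eqv i (tgt_at n i u) (src_at n i v) ->
    eqv n.+1 (tid (tcomp i u v)) (tcomp i (tid u) (tid v)).

End Cells.

Arguments srcn : clear implicits.
Arguments tgtn : clear implicits.
Arguments cell : clear implicits.
Arguments eqv : clear implicits.

Definition pwf (P : prepoly) : Prop :=
  forall k (g : gen P k.+1),
    cell P k (psrc g) /\ cell P k (ptgt g) /\
    (0 < k -> eqv P k.-1 (srcn P k (psrc g)) (srcn P k (ptgt g)) /\
              eqv P k.-1 (tgtn P k (psrc g)) (tgtn P k (ptgt g))).

Record polygraph := Polygraph { ppre :> prepoly; ppwf : pwf ppre }.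

Record pmor (P Q : polygraph) := Pmor {
  pmap :> forall n, gen P n -> gen Q n;
  pmap_src : forall k (g : gen P k.+1),
      eqv Q k (map_term pmap (psrc g)) (psrc (pmap g));
  pmap_tgt : forall k (g : gen P k.+1),
      eqv Q k (map_term pmap (ptgt g)) (ptgt (pmap g))
}.

Arguments pmap {P Q} p n g.

(* F^* applied to a cell is map_term F. *)

(* Objects of Elt(Pol_omega^* ): a polygraph together with a cell of P^*
   of some dimension. *)
Record elt := Elt {
  epoly : polygraph;
  edim : nat;
  ecell : term (gen epoly);
  ecellP : cell epoly edim ecell
}.

Record emor (X Y : elt) := Emor {
  emap : pmor (epoly X) (epoly Y);
  emap_dim : edim X = edim Y;
  emap_cell : eqv (epoly Y) (edim Y) (map_term emap (ecell X)) (ecell Y)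
}.

(* Monomorphisms in Pol_omega (composition written out pointwise). *)
Definition pmono (P Q : polygraph) (F : pmor P Q) : Prop :=
  forall (R : polygraph) (H K : pmor R P),
    (forall n (g : gen R n), F n (H n g) = F n (K n g)) -> H = K.

(* Isomorphisms in Elt(Pol_omega^* ) (composites written out pointwise). *)
Definition eiso (X Y : elt) (F : emor X Y) : Prop :=
  exists G : emor Y X,
    (forall n (g : gen (epoly X) n), emap G n (emap F n g) = g) /\
    (forall n (g : gen (epoly Y) n), emap F n (emap G n g) = g).

Definition principal (X : elt) : Prop :=
  forall (Y : elt) (F : emor Y X), pmono (emap F) -> eiso F.

(* Suppose F^*(u) = G^*(u).  The generators occurring outside identities in u
   and in its iterated sources form sequences that no precategory axiom
   changes (there is no interchange law), so F and G agree on them.  Every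
   generator occurring in u lies below one of them, "below" meaning reachable
   by repeatedly passing to generators of sources and targets.  Agreement
   propagates downwards, by induction on dimension, since F g = G g gives
   F^*(s g) = s(F g) = s(G g) = G^*(s g).  Hence the generators on which F and
   G agree form a sub-polygraph containing a lift of u; its inclusion is a
   monomorphism into (P,u), which principality makes an isomorphism. *)

From Stdlib Require Import List Relation_Operators Operators_Properties.
From Stdlib Require Import Eqdep_dec PeanoNat ClassicalEpsilon ProofIrrelevance.
From Stdlib Require Import FunctionalExtensionality.
From mathcomp Require Import all_boot zify.

Set Implicit Arguments.
Unset Strict Implicit.
Unset Printing Implicit Defensive.

Section Terms.
Variable G : nat -> Type.

Fixpoint gens (t : term G) : list (sigT G) :=
  match t with
  | tgen n g => [:: existT _ n g]
  | tid t' => gens t'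
  | tcomp _ u v => gens u ++ gens v
  end.

Fixpoint ess_gens (t : term G) : list (sigT G) :=
  match t with
  | tgen n g => [:: existT _ n g]
  | tid _ => [::]
  | tcomp _ u v => ess_gens u ++ ess_gens v
  end.

Lemma ess_gens_sub t x : In x (ess_gens t) -> In x (gens t).
Proof.
elim: t => [m g|t _ []|i u IHu v IHv] //= /in_app_iff [/IHu|/IHv] ?;
  apply/in_app_iff; by [left|right].
Qed.

End Terms.

Section MapTerm.
Variables (G G' : nat -> Type) (f : forall n, G n -> G' n).

Definition map_gen (x : sigT G) : sigT G' := existT _ (projT1 x) (f (projT2 x)).

Lemma ess_gens_map t : ess_gens (map_term f t) = map map_gen (ess_gens t).
Proof. by elim: t => //= i u -> v ->; rewrite map_cat. Qed.

Lemma map_term_inj : (forall n, injective (@f n)) -> injective (map_term f).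
Proof.
move=> f_inj; elim=> [m g|t IH|i u IHu v IHv] [m' g'|t'|i' u' v'] //= e.
- have em : m = m' by case: e.
  subst m'; congr tgen; apply: f_inj.
  by apply: (inj_pair2_eq_dec _ Nat.eq_dec); case: e.
- by case: e => /IH ->.
- by case: e => -> /IHu -> /IHv ->.
Qed.

End MapTerm.

Notation among s := (fun x => In x s).

Section Boundaries.
Variable P : prepoly.
Local Notation T := (term (gen P)).

Lemma srci_add d1 d2 n (t : T) :
  srci (d1 + d2) n t = srci d2 (n - d1) (srci d1 n t).
Proof.
elim: d1 n t => [|d1 IH] n t /=; first by rewrite subn0.
by rewrite IH; congr srci; lia.
Qed.

Lemma srci_comp j n i (a b : T) : i < n ->
  srci j n (tcomp i a b) =
  if j < n - i then tcomp i (srci j n a) (srci j n b) else srci j n a.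
Proof.
elim: j n a b => [|j IH] n a b lt_in /=; first by rewrite subn_gt0 lt_in.
case: eqP => [->|ne]; first by rewrite ifF //; lia.
by rewrite IH; last lia; congr (if _ then _ else _); apply/idP/idP; lia.
Qed.

Lemma tgti_comp j n i (a b : T) : i < n ->
  tgti j n (tcomp i a b) =
  if j < n - i then tcomp i (tgti j n a) (tgti j n b) else tgti j n b.
Proof.
elim: j n a b => [|j IH] n a b lt_in /=; first by rewrite subn_gt0 lt_in.
case: eqP => [->|ne]; first by rewrite ifF //; lia.
by rewrite IH; last lia; congr (if _ then _ else _); apply/idP/idP; lia.
Qed.

Lemma srci_idn j k n (s : T) : j <= k -> srci j n (idn k s) = idn (k - j) s.
Proof.
elim: j k n => [|j IH] k n le_jk /=; first by rewrite subn0.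
by case: k le_jk => // k le_jk /=; rewrite IH.
Qed.

Lemma ess_gens_idn k (s : T) : 0 < k -> ess_gens (idn k s) = [::].
Proof. by case: k. Qed.

Lemma gens_idn k (s : T) : gens (idn k s) = gens s.
Proof. by elim: k => //= k ->. Qed.

(* Each axiom only reassociates or inserts and removes identities, so none of
   them changes these sequences; the interchange law would permute them. *)
Lemma eqv_ess_srci n (a b : T) : eqv P n a b ->
  forall j, ess_gens (srci j n a) = ess_gens (srci j n b).
Proof.
elim=> {n a b}.
- by [].
- by move=> n a b _ IH j; rewrite IH.
- by move=> n a b c _ IH1 _ IH2 j; rewrite IH1 IH2.
- by move=> n a b _ IH [|j] //=; apply: IH.
- move=> n i u u' v v' lt_in _ IHu _ IHv _ _ j.
  by rewrite !srci_comp //; case: ifP => _ /=; rewrite ?IHu ?IHv.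
- move=> n i u v w lt_in _ _ _ _ _ _ _ j.
  by rewrite !srci_comp //; case: ifP => h /=; rewrite ?srci_comp ?h //= catA.
- move=> n i u lt_in _ j; rewrite srci_comp //; case: ifP => h /=.
    by rewrite srci_idn ?ess_gens_idn //; lia.
  have -> : j = (n - i) + (j - (n - i)) by lia.
  by rewrite srci_add srci_idn // subnn /= srci_add.
- move=> n i u lt_in _ j; rewrite srci_comp //; case: ifP => h //=.
  by rewrite srci_idn ?ess_gens_idn ?cats0 //; lia.
- by move=> n i u v lt_in _ _ _ _ [|j] //=; rewrite ifF //; lia.
Qed.

Definition face (x y : sigT (gen P)) : Prop :=
  match y with
  | existT 0 _ => False
  | existT k.+1 g => In x (gens (psrc g)) \/ In x (gens (ptgt g))
  end.

Definition below := clos_refl_trans _ face.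

Definition covered (p q : sigT (gen P) -> Prop) :=
  forall x, p x -> exists2 y, q y & below x y.

Lemma covered_sub p q : (forall x, p x -> q x) -> covered p q.
Proof. by move=> pq x /pq qx; exists x => //; apply: rt_refl. Qed.

Lemma covered_trans p q r : covered p q -> covered q r -> covered p r.
Proof.
move=> pq qr x /pq [y /qr [z rz yz] xy].
by exists z => //; apply: rt_trans xy yz.
Qed.

Lemma covered_cat s1 s2 q :
  covered (among s1) q -> covered (among s2) q -> covered (among (cat s1 s2)) q.
Proof. by move=> h1 h2 x /in_app_iff [/h1|/h2]. Qed.

Lemma covered_catl {s1 s2} : covered (among s1) (among (cat s1 s2)).
Proof. by apply: covered_sub => x h; apply/in_app_iff; left. Qed.

Lemma covered_catr {s1 s2} : covered (among s2) (among (cat s1 s2)).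
Proof. by apply: covered_sub => x h; apply/in_app_iff; right. Qed.

Lemma gens_srcn_covered n (t : T) :
  covered (among (gens (srcn P n t))) (among (gens t)).
Proof.
elim: t n => [[|k] g|t IH|i u IHu v IHv] n /=; try exact: covered_sub.
- by move=> x x_g; exists (existT _ k.+1 g); [left | apply: rt_step; left].
- case: eqP => _; first exact: covered_trans (IHu n) covered_catl.
  by apply: covered_cat; [apply: covered_trans (IHu n) covered_catl
                         |apply: covered_trans (IHv n) covered_catr].
Qed.

Lemma gens_tgtn_covered n (t : T) :
  covered (among (gens (tgtn P n t))) (among (gens t)).
Proof.
elim: t n => [[|k] g|t IH|i u IHu v IHv] n /=; try exact: covered_sub.
- by move=> x x_g; exists (existT _ k.+1 g); [left | apply: rt_step; right].
- case: eqP => _; first exact: covered_trans (IHv n) covered_catr.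
  by apply: covered_cat; [apply: covered_trans (IHu n) covered_catl
                         |apply: covered_trans (IHv n) covered_catr].
Qed.

Lemma gens_srci_covered j n (t : T) :
  covered (among (gens (srci j n t))) (among (gens t)).
Proof.
elim: j n t => [|j IH] n t /=; first exact: covered_sub.
apply: covered_trans (IH _ _) _; exact: gens_srcn_covered.
Qed.

Lemma gens_tgti_covered j n (t : T) :
  covered (among (gens (tgti j n t))) (among (gens t)).
Proof.
elim: j n t => [|j IH] n t /=; first exact: covered_sub.
apply: covered_trans (IH _ _) _; exact: gens_tgtn_covered.
Qed.

Lemma eqv_gens_covered n (a b : T) : eqv P n a b ->
  covered (among (gens a)) (among (gens b)) /\ covered (among (gens b)) (among (gens a)).
Proof.
elim=> {n a b} /=.
- by move=> *; split; apply: covered_sub.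
- by move=> n a b _ [].
- by move=> n a b c _ [ab ba] _ [bc cb]; split; apply: covered_trans; eauto.
- by [].
- move=> n i u u' v v' _ _ [uu' u'u] _ [vv' v'v] _ _.
  by split; apply: covered_cat;
    [apply: covered_trans uu' covered_catl|apply: covered_trans vv' covered_catr
    |apply: covered_trans u'u covered_catl|apply: covered_trans v'v covered_catr].
- by move=> *; rewrite -!catA; split; apply: covered_sub.
- move=> n i u _ _; rewrite gens_idn; split; last exact: covered_catr.
  by apply: covered_cat; [exact: gens_srci_covered|exact: covered_sub].
- move=> n i u _ _; rewrite gens_idn; split; last exact: covered_catl.
  by apply: covered_cat; [exact: covered_sub|exact: gens_tgti_covered].
- by move=> *; split; apply: covered_sub.
Qed.

Definition ess_src n (t : T) y := exists j, In y (ess_gens (srci j n t)).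

Lemma ess_src_id n (s : T) : covered (ess_src n s) (ess_src n.+1 (tid s)).
Proof. by apply: covered_sub => y [j h]; exists j.+1. Qed.

Lemma ess_src_compl n i (a b : T) : i < n ->
  covered (ess_src n a) (ess_src n (tcomp i a b)).
Proof.
move=> lt_in; apply: covered_sub => y [j h]; exists j.
by rewrite srci_comp //; case: ifP => //= _; apply/in_app_iff; left.
Qed.

(* Past dimension i, the iterated sources of [b] are those of its i-source,
   which has the same essential generators as the i-target of [a]. *)
Lemma ess_src_compr n i (a b : T) : i < n ->
  eqv P i (tgt_at n i a) (src_at n i b) ->
  covered (among (gens (tgt_at n i a))) (ess_src n a) ->
  covered (ess_src n b) (ess_src n (tcomp i a b)).
Proof.
move=> lt_in ab tgt_a y [j y_b]; case: (ltnP j (n - i)) => [lt_j|le_j].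
  exists y; last exact: rt_refl.
  by exists j; rewrite srci_comp // lt_j /=; apply/in_app_iff; right.
move: y_b; rewrite -(subnKC le_j) srci_add (_ : n - (n - i) = i); last lia.
rewrite -/(src_at n i b) -(eqv_ess_srci ab) => /ess_gens_sub.
apply: (covered_trans (@gens_srci_covered _ _ _)).
exact: covered_trans tgt_a (ess_src_compl b lt_in).
Qed.

Lemma gens_covered_ess_src n (t : T) : cell P n t ->
  covered (among (gens t)) (ess_src n t) /\
  forall i, i < n -> covered (among (gens (tgt_at n i t))) (ess_src n t).
Proof.
have gen_ess m (g : gen P m) : covered (among (gens (tgen g))) (ess_src m (tgen g)).
  by apply: covered_sub => x x_g; exists 0.
elim=> {n t} [n g|n s _ [IH1 IH2]|n i a b lt_in _ [IHa1 IHa2] _ [IHb1 IHb2] ab].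
- split=> [|i _]; first exact: gen_ess.
  exact: covered_trans (@gens_tgti_covered (n - i) n (tgen g)) (gen_ess n g).
- split=> [|i lt_i]; first exact: covered_trans IH1 (@ess_src_id _ _).
  have -> : tgt_at n.+1 i (tid s) = tgt_at n i s.
    by rewrite /tgt_at (_ : n.+1 - i = (n - i).+1); last lia.
  apply: covered_trans _ (@ess_src_id n s).
  have [lt_in|->] : i < n \/ i = n by lia.
    exact: IH2.
  by rewrite /tgt_at subnn.
- have cov_a p : covered p (ess_src n a) -> covered p (ess_src n (tcomp i a b)).
    by move/covered_trans; apply; apply: ess_src_compl.
  have cov_b p : covered p (ess_src n b) -> covered p (ess_src n (tcomp i a b)).
    by move/covered_trans; apply; apply: ess_src_compr => //; apply: IHa2.
  split=> [|i' lt_i']; first by apply: covered_cat; [apply: cov_a|apply: cov_b].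
  rewrite /tgt_at tgti_comp //; case: ifP => _; last exact: cov_b (IHb2 _ _).
  by apply: covered_cat; [apply: cov_a (IHa2 _ _)|apply: cov_b (IHb2 _ _)].
Qed.

End Boundaries.

Section Dimension.
Variable P : polygraph.

Lemma cell_gens_dim n t : cell P n t -> forall x, In x (gens t) -> projT1 x <= n.
Proof.
elim=> {n t} [n g x [<-|]|n t _ IH x /IH /leqW|n i u v _ _ IHu _ IHv _ x] //.
by case/in_app_iff => [/IHu|/IHv].
Qed.

Lemma below_dim (x y : sigT (gen P)) : below x y -> projT1 x <= projT1 y.
Proof.
elim=> {x y} [x [[|k] g] //= xy|//|x y z _ xy _ yz]; last exact: leq_trans xy yz.
have [src_cell [tgt_cell _]] := ppwf g.
by case: xy => [/(cell_gens_dim src_cell)|/(cell_gens_dim tgt_cell)] /leqW.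
Qed.

Lemma ess_src_dim n t x : cell P n t -> ess_src n t x -> projT1 x <= n.
Proof.
move=> t_cell [j /ess_gens_sub /gens_srci_covered [y /(cell_gens_dim t_cell) y_n]].
by move/below_dim/leq_trans; apply.
Qed.

End Dimension.

Scheme cell_mind := Induction for cell Sort Prop
  with eqv_mind := Induction for eqv Sort Prop.
Combined Scheme cell_eqv_mind from cell_mind, eqv_mind.

Section StrictMorphism.
Variables (P Q : prepoly) (f : forall n, gen P n -> gen Q n).
Hypothesis f_src : forall k (g : gen P k.+1), map_term f (psrc g) = psrc (f g).
Hypothesis f_tgt : forall k (g : gen P k.+1), map_term f (ptgt g) = ptgt (f g).

Lemma map_srcn n t : map_term f (srcn P n t) = srcn Q n (map_term f t).
Proof.
elim: t n => [[|k] g|t IH|i u IHu v IHv] n //=.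
by case: eqP => _ //=; rewrite IHu ?IHv.
Qed.

Lemma map_tgtn n t : map_term f (tgtn P n t) = tgtn Q n (map_term f t).
Proof.
elim: t n => [[|k] g|t IH|i u IHu v IHv] n //=.
by case: eqP => _ //=; rewrite IHu ?IHv.
Qed.

Lemma map_src_at n i t : map_term f (src_at n i t) = src_at n i (map_term f t).
Proof.
rewrite /src_at; move: (n - i) => j; elim: j n t => [|j IH] n t //=.
by rewrite IH map_srcn.
Qed.

Lemma map_tgt_at n i t : map_term f (tgt_at n i t) = tgt_at n i (map_term f t).
Proof.
rewrite /tgt_at; move: (n - i) => j; elim: j n t => [|j IH] n t //=.
by rewrite IH map_tgtn.
Qed.

Lemma map_idn k t : map_term f (idn k t) = idn k (map_term f t).
Proof. by elim: k => //= k ->. Qed.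

Hypothesis f_inj : forall n, injective (@f n).
Hypothesis image_eqv_closed : forall n a b', eqv Q n (map_term f a) b' ->
  exists b, map_term f b = b'.

Local Notation map_inj := (map_term_inj f_inj).

Lemma reflect_cell_eqv :
  (forall n t', cell Q n t' -> forall t, map_term f t = t' -> cell P n t) /\
  (forall n a' b', eqv Q n a' b' -> forall a b,
     map_term f a = a' -> map_term f b = b' -> eqv P n a b).
Proof.
apply: (@cell_eqv_mind Q
  (fun n t' _ => forall t, map_term f t = t' -> cell P n t)
  (fun n a' b' _ => forall a b, map_term f a = a' -> map_term f b = b' -> eqv P n a b)).
- move=> n g' [m g|//|//] /= e.
  by case: e => em; subst m => _; apply: c_gen.
- by move=> n t' _ IH [//|t|//] [/IH]; apply: c_id.
- move=> n i u' v' lt_in _ IHu _ IHv _ IHuv [//|//|i0 u v] [-> eu ev].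
  apply: c_comp lt_in (IHu _ eu) (IHv _ ev) _.
  by apply: IHuv; rewrite ?map_tgt_at ?map_src_at ?eu ?ev.
- move=> n t' _ IH a b ea eb.
  have <- : a = b by apply: map_inj; rewrite ea eb.
  exact: e_refl (IH _ ea).
- by move=> n a' b' _ IH a b ea eb; apply: e_sym (IH _ _ eb ea).
- move=> n a' b' c' e1 IH1 _ IH2 a c ea ec.
  rewrite -ea in e1; have [b eb] := image_eqv_closed e1.
  exact: e_trans (IH1 _ _ ea eb) (IH2 _ _ eb ec).
- by move=> n a' b' _ IH [//|a|//] [//|b|//] [ea] [eb]; apply: e_id (IH _ _ ea eb).
- move=> n i u' u1' v' v1' lt_in _ IHu _ IHv _ IHuv [//|//|i0 u v] [//|//|i1 u1 v1].
  move=> [-> eu ev] [-> eu1 ev1].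
  apply: e_comp lt_in (IHu _ _ eu eu1) (IHv _ _ ev ev1) _.
  by apply: IHuv; rewrite ?map_tgt_at ?map_src_at ?eu ?ev.
- move=> n i u' v' w' lt_in _ IHu _ IHv _ IHw _ IHuv _ IHvw.
  move=> [//|//|i0 [//|//|i1 u v] w] [//|//|i2 u1 [//|//|i3 v1 w1]] /=.
  move=> [-> -> eu ev ew] [-> eu1 -> ev1 ew1].
  rewrite -eu in eu1; rewrite -ev in ev1; rewrite -ew in ew1.
  move: eu1 ev1 ew1 => /map_inj-> /map_inj-> /map_inj->.
  apply: e_assoc lt_in (IHu _ eu) (IHv _ ev) (IHw _ ew) _ _.
    by apply: IHuv; rewrite ?map_tgt_at ?map_src_at ?eu ?ev.
  by apply: IHvw; rewrite ?map_tgt_at ?map_src_at ?ev ?ew.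
- move=> n i u' lt_in _ IHu [//|//|i0 x u] b /= [-> ex eu] eb.
  rewrite -eu -map_src_at -map_idn in ex; rewrite -eu in eb.
  move: ex eb => /map_inj-> /map_inj->.
  exact: e_unitl lt_in (IHu _ eu).
- move=> n i u' lt_in _ IHu [//|//|i0 u x] b /= [-> eu ex] eb.
  rewrite -eu -map_tgt_at -map_idn in ex; rewrite -eu in eb.
  move: ex eb => /map_inj-> /map_inj->.
  exact: e_unitr lt_in (IHu _ eu).
- move=> n i u' v' lt_in _ IHu _ IHv _ IHuv [//|[//|//|i0 u v]|//].
  move=> [//|//|i1 [//|u1|//] [//|v1|//]] /= [-> eu ev] [-> eu1 ev1].
  rewrite -eu in eu1; rewrite -ev in ev1.
  move: eu1 ev1 => /map_inj-> /map_inj->.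
  apply: e_idcomp lt_in (IHu _ eu) (IHv _ ev) _.
  by apply: IHuv; rewrite ?map_tgt_at ?map_src_at ?eu ?ev.
Qed.

End StrictMorphism.

Section Agreement.
Variables P Q : polygraph.

(* [H] maps the source of a generator to the source of its image only up to
   [eqv], which [eqv_ess_srci] makes harmless. *)
Lemma ess_srci_map (H : pmor P Q) j n t : cell P n t ->
  ess_gens (srci j n (map_term H t)) = map (map_gen H) (ess_gens (srci j n t)).
Proof.
elim: j n t => [|j IHj] n t t_cell; first exact: ess_gens_map.
elim: t_cell => {n t} [[|k] g|n s s_cell _|n i a b lt_in _ IHa _ IHb _].
- exact: (IHj 0 _ (c_gen g)).
- by rewrite /= -(eqv_ess_srci (pmap_src H g)); apply: IHj; case: (ppwf g).
- exact: IHj s_cell.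
- by rewrite !srci_comp //; case: ifP => _ //=; rewrite IHa IHb map_cat.
Qed.

Variables F G : pmor P Q.

Definition agree (x : sigT (gen P)) := F _ (projT2 x) = G _ (projT2 x).

Lemma agree_map_gen s : map (map_gen F) s = map (map_gen G) s ->
  forall x, In x s -> agree x.
Proof.
elim: s => [//|y s IH] /= [eFG /IH agree_s] x [<-|//]; last exact: agree_s.
exact: (inj_pair2_eq_dec _ Nat.eq_dec _ _ _ _ eFG).
Qed.

Lemma ess_src_agree n t x : cell P n t ->
  eqv Q n (map_term F t) (map_term G t) -> ess_src n t x -> agree x.
Proof.
move=> t_cell eFG [j x_t]; apply: (agree_map_gen _ x_t).
by rewrite -!ess_srci_map // (eqv_ess_srci eFG).
Qed.

Lemma gens_covered_agree n t : cell P n t ->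
  eqv Q n (map_term F t) (map_term G t) ->
  covered (among (gens t)) (fun z => agree z /\ projT1 z <= n).
Proof.
move=> t_cell eFG x /(proj1 (gens_covered_ess_src t_cell)) [z z_t xz].
by exists z => //; split; [apply: ess_src_agree eFG z_t|apply: ess_src_dim t_cell z_t].
Qed.

Lemma agree_below x y : below x y -> agree y -> agree x.
Proof.
move=> xy; move: {2}(projT1 y) (leqnn (projT1 y)) => d; move: xy.
elim: d x y => [|d IHd] x y
  /(clos_rt_rtn1 _ _ _ _) [//|w z wz /(clos_rtn1_rt _ _ _ _) xw];
  case: z wz => [[|k] g] //= wg k_d agree_g.
have [src_cell [tgt_cell _]] := ppwf g.
have cov : covered (among (gens (psrc g) ++ gens (ptgt g)))
                   (fun z => agree z /\ projT1 z <= k).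
  apply: covered_cat;
    [apply: gens_covered_agree src_cell _|apply: gens_covered_agree tgt_cell _].
  + by apply: e_trans (pmap_src F g) _; rewrite agree_g; apply/e_sym/pmap_src.
  + by apply: e_trans (pmap_tgt F g) _; rewrite agree_g; apply/e_sym/pmap_tgt.
have [v [agree_v v_k] wv] := cov w (in_or_app _ _ _ wg).
exact: IHd (rt_trans _ _ _ _ _ xw wv) (leq_trans v_k k_d) agree_v.
Qed.

Lemma gens_agree n t : cell P n t -> eqv Q n (map_term F t) (map_term G t) ->
  forall x, In x (gens t) -> agree x.
Proof.
move=> t_cell eFG x /(gens_covered_agree t_cell eFG) [z [agree_z _] xz].
exact: agree_below xz agree_z.
Qed.

End Agreement.

Lemma pmor_ext (P Q : polygraph) (H K : pmor P Q) :
  (forall n g, H n g = K n g) -> H = K.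
Proof.
case: H K => [h hs ht] [k ks kt] /= e.
have ehk : h = k.
  by apply: functional_extensionality_dep => n; apply: functional_extensionality.
by subst k; f_equal; apply: proof_irrelevance.
Qed.

Section SubPolygraph.
Variables (P : polygraph) (S : sigT (gen P) -> Prop).

Definition sub_gen n := {g : gen P n | S (existT _ n g)}.
Definition incl n (g : sub_gen n) : gen P n := proj1_sig g.

Lemma incl_inj n : injective (@incl n).
Proof. by move=> [g Sg] [h Sh] /= egh; subst h; rewrite (proof_irrelevance _ Sg Sh). Qed.

Lemma gens_incl t x : In x (gens (map_term incl t)) -> S x.
Proof.
elim: t => [m g [<-|//]|t IH|i u IHu v IHv /in_app_iff [/IHu|/IHv]] //=.
exact: proj2_sig g.
Qed.

Lemma lift_term t : (forall x, In x (gens t) -> S x) -> exists t', map_term incl t' = t.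
Proof.
elim: t => [m g|t IH|i u IHu v IHv] /= St.
- by exists (tgen (exist _ g (St _ (or_introl erefl)))).
- by have [t' <-] := IH St; exists (tid t').
- have [u' <-] := IHu (fun x xu => St x (in_or_app _ _ _ (or_introl xu))).
  have [v' <-] := IHv (fun x xv => St x (in_or_app _ _ _ (or_intror xv))).
  by exists (tcomp i u' v').
Qed.

Hypothesis S_below : forall x y, below x y -> S y -> S x.

Lemma lift_boundary k (g : sub_gen k.+1) :
  (exists s, map_term incl s = psrc (incl g)) /\
  (exists t, map_term incl t = ptgt (incl g)).
Proof.
by split; apply: lift_term => x x_g; apply: S_below (proj2_sig g);
  apply: rt_step; [left|right].
Qed.

Definition sub_src k (g : sub_gen k.+1) : term sub_gen :=
  proj1_sig (constructive_indefinite_description _ (proj1 (lift_boundary g))).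
Definition sub_tgt k (g : sub_gen k.+1) : term sub_gen :=
  proj1_sig (constructive_indefinite_description _ (proj2 (lift_boundary g))).

Lemma incl_sub_src k (g : sub_gen k.+1) : map_term incl (sub_src g) = psrc (incl g).
Proof. by rewrite /sub_src; case: constructive_indefinite_description. Qed.

Lemma incl_sub_tgt k (g : sub_gen k.+1) : map_term incl (sub_tgt g) = ptgt (incl g).
Proof. by rewrite /sub_tgt; case: constructive_indefinite_description. Qed.

Definition sub_prepoly : prepoly := Prepoly sub_src sub_tgt.

Lemma eqv_lift n a b : eqv P n (map_term incl a) b -> exists b', map_term incl b' = b.
Proof.
move=> /eqv_gens_covered [_ ba]; apply: lift_term => x /ba [y /gens_incl Sy xy].
exact: S_below xy Sy.
Qed.

Let sub_reflect :=
  reflect_cell_eqv (P := sub_prepoly) incl_sub_src incl_sub_tgt incl_inj eqv_lift.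

Lemma sub_pwf : pwf sub_prepoly.
Proof.
move=> k g; have [src_cell [tgt_cell glob]] := ppwf (incl g).
have [to_cell to_eqv] := sub_reflect.
split; first exact: to_cell src_cell _ (incl_sub_src g).
split; first exact: to_cell tgt_cell _ (incl_sub_tgt g).
have srcnE := map_srcn (P := sub_prepoly) incl_sub_src.
have tgtnE := map_tgtn (P := sub_prepoly) incl_sub_tgt.
move=> /glob [src_eqv tgt_eqv].
split; [apply: to_eqv src_eqv _ _ _ _|apply: to_eqv tgt_eqv _ _ _ _];
  by rewrite ?srcnE ?tgtnE ?incl_sub_src ?incl_sub_tgt.
Qed.

Definition sub_polygraph : polygraph := Polygraph sub_pwf.

Lemma sub_cell n t : cell P n (map_term incl t) -> cell sub_polygraph n t.
Proof. by move=> t_cell; apply: (proj1 sub_reflect) t_cell _ _. Qed.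

Lemma incl_src k (g : gen sub_polygraph k.+1) :
  eqv P k (map_term incl (psrc g)) (psrc (incl g)).
Proof. by rewrite incl_sub_src; apply: e_refl; case: (ppwf (incl g)). Qed.

Lemma incl_tgt k (g : gen sub_polygraph k.+1) :
  eqv P k (map_term incl (ptgt g)) (ptgt (incl g)).
Proof. by rewrite incl_sub_tgt; apply: e_refl; case: (ppwf (incl g)) => _ []. Qed.

Definition sub_incl : pmor sub_polygraph P := Pmor incl_src incl_tgt.

Lemma sub_incl_mono : pmono sub_incl.
Proof. by move=> R H K HK; apply: pmor_ext => n g; apply: incl_inj (HK n g). Qed.

End SubPolygraph.

Lemma principal_down_closed_full (X : elt) (S : sigT (gen (epoly X)) -> Prop) :
  principal X -> (forall x y, below x y -> S y -> S x) ->
  (forall x, In x (gens (ecell X)) -> S x) -> forall x, S x.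
Proof.
case: X S => P n u u_cell /= S prX S_below S_u [m g].
have [u' eu'] := lift_term S_u.
have u'_cell : cell (sub_polygraph S_below) n u' by apply: sub_cell; rewrite eu'.
have incl_u' : eqv P n (map_term (sub_incl S_below) u') u.
  by rewrite /= eu'; apply: e_refl.
pose incl_u := @Emor (Elt u'_cell) (Elt u_cell) (sub_incl S_below) erefl incl_u'.
have [H [_ inclK]] := prX _ incl_u (@sub_incl_mono _ _ S_below).
by rewrite -(inclK m g); case: (emap H m g).
Qed.

Theorem lemma4p6 (X Y : elt) (F G : emor X Y) :
  principal X -> emap F = emap G.
Proof.
move=> prX; apply: pmor_ext => n g.
have eFG : eqv (epoly Y) (edim X)
    (map_term (emap F) (ecell X)) (map_term (emap G) (ecell X)).
  by rewrite (emap_dim F); apply: e_trans (emap_cell F) (e_sym (emap_cell G)).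
apply: (principal_down_closed_full (S := agree (emap F) (emap G)) prX _ _ (existT _ n g)).
- by move=> x y; apply: agree_below.
- exact: gens_agree (ecellP X) eFG.
Qed.
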